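(* Let $V$ be a finite nonempty set of voters and $A$ a finite set of alternatives. Let $F:\mathcal{P}(V,A)\to S_2(A)$ be a consular election rule that is irreducible, weakly viable, strategy-proof for optimists and strategy-proof for pessimists. Then $F$ has a range dictator: there is a voter $i\in V$ such that for every profile $P$, $F(P)$ is the favourite committee of $P_i$ in the range of $F$.
   Context: A profile $P\in\mathcal{P}(V,A)$ assigns to each voter $i\in V$ a linear order $P_i$ on $A$ (with strict part $\succ_i$ and weak part $\succeq_i$); $P_i'P_{-i}$ denotes the profile obtained from $P$ by replacing $P_i$ with $P_i'$, and for $B\subseteq A$, $P|_B$ is the profile of restrictions to $B$. $S_2(A)$ is the set of $2$-element subsets of $A$. A consular election rule is a map $F:\mathcal{P}(V,A)\to S_2(A)$. For nonempty $W\subseteq A$, $\mathrm{best}(P_i,W)$ and $\mathrm{worst}(P_i,W)$ are the $P_i$-best and $P_i$-worst elements of $W$. $F$ is strategy-proof for optimists (SPO) if for every profile $P$, voter $i$ and linear order $P_i'$, with $W=F(P)$ and $W'=F(P_i'P_{-i})$, we have $\mathrm{best}(P_i,W)\succeq_i \mathrm{best}(P_i,W')$; it is strategy-proof for pessimists (SPP) if likewise $\mathrm{worst}(P_i,W)\succeq_i\mathrm{worst}(P_i,W')$. $F$ is weakly viable if for every $a\in A$ there is a profile $P$ with $a\in F(P)$. $F$ is reducible if there is a partition $A=B\uplus C$ and social choice functions $G:\mathcal{P}(V,B)\to B$, $H:\mathcal{P}(V,C)\to C$ such that $F(P)=\{G(P|_B),H(P|_C)\}$ for all $P$; irreducible means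 not reducible. For a linear order $L$ on $A$ and $X,Y\in S_2(A)$, write $X\succeq^O Y$ iff $\mathrm{best}(L,X)\succeq\mathrm{best}(L,Y)$ and $X\succeq^P Y$ iff $\mathrm{worst}(L,X)\succeq\mathrm{worst}(L,Y)$ (comparisons in $L$). A favourite committee of $L$ in a set $\mathcal{X}\subseteq S_2(A)$ is an element of $\mathcal{X}$ that is maximal in $\mathcal{X}$ with respect to both $\succeq^O$ and $\succeq^P$ (for SPO and SPP rules it exists and is unique in the range of $F$). *)

From mathcomp Require Import all_boot.
Set Implicit Arguments. Unset Strict Implicit. Unset Printing Implicit Defensive.

(* A linear order on T, given by its weak part [r x y] meaning "x is weakly
   preferred to y" (x ⪰ y). *)
Definition is_linear (T : Type) (r : rel T) : Prop :=
  [/\ reflexive r, antisymmetric r, transitive r & total r].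

Record lorder (T : Type) := LOrder { lrel :> rel T; lrel_lin : is_linear lrel }.

Definition profile (V T : Type) := V -> lorder T.

Definition update (V : eqType) (T : Type) (P : profile V T) (i : V) (L : lorder T)
  : profile V T := fun j => if j == i then L else P j.

Definition sub_of (A : finType) (B : {set A}) := {x : A | x \in B}.

Lemma restr_lin (A : finType) (B : {set A}) (L : lorder A) :
  is_linear (fun x y : sub_of B => L (val x) (val y)).
Proof.
case: L => r [rr ra rt rto]; split.
- by move=> x; apply: rr.
- by move=> x y /ra/val_inj.
- by move=> x y z; apply: rt.
- by move=> x y; apply: rto.
Qed.

Definition restr_order (A : finType) (B : {set A}) (L : lorder A) : lorder (sub_of B) :=
  LOrder (restr_lin B L).

Definition restr (V A : finType) (P : profile V A) (B : {set A}) : profile V (sub_of B) :=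
  fun i => restr_order B (P i).

Definition is_best (A : finType) (L : lorder A) (W : {set A}) (x : A) : Prop :=
  x \in W /\ forall y, y \in W -> L x y.
Definition is_worst (A : finType) (L : lorder A) (W : {set A}) (x : A) : Prop :=
  x \in W /\ forall y, y \in W -> L y x.

Definition geO (A : finType) (L : lorder A) (X Y : {set A}) : Prop :=
  forall b b', is_best L X b -> is_best L Y b' -> L b b'.
Definition geP (A : finType) (L : lorder A) (X Y : {set A}) : Prop :=
  forall w w', is_worst L X w -> is_worst L Y w' -> L w w'.

Section Rules.
Variables (V A : finType).
Implicit Type F : profile V A -> {set A}.

Definition SPO F : Prop :=
  forall (P : profile V A) (i : V) (L : lorder A), geO (P i) (F P) (F (update P i L)).

Definition SPP F : Prop :=
  forall (P : profile V A) (i : V) (L : lorder A), geP (P i) (F P) (F (update P i L)).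

Definition weakly_viable F : Prop := forall a : A, exists P, a \in F P.

Definition reducible F : Prop :=
  exists (B C : {set A}),
    [/\ [disjoint B & C], B :|: C = setT &
     exists (G : profile V (sub_of B) -> sub_of B) (H : profile V (sub_of C) -> sub_of C),
       forall P, F P = [set val (G (restr P B)); val (H (restr P C))]].

Definition irreducible F : Prop := ~ reducible F.

Definition in_range F (X : {set A}) : Prop := exists P, F P = X.

Definition favourite_in_range (L : lorder A) F (X : {set A}) : Prop :=
  in_range F X /\ forall Y, in_range F Y -> geO L X Y /\ geP L X Y.

Definition range_dictator F : Prop :=
  exists i : V, forall P : profile V A, favourite_in_range (P i) F (F P).
End Rules.

From mathcomp Require Import all_boot zify boolp.

Set Implicit Arguments. Unset Strict Implicit. Unset Printing Implicit Defensive.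

(* Call two alternatives adjacent when they form a committee in the range of F.
   Strategy-proofness for optimists and pessimists, with viability, forces
   every alternative to be adjacent to an endpoint of every edge.  Without a triangle, an alternative together with its non-neighbours
   and the set of its neighbours would both be independent, so every committee
   would consist of one member from each side, each depending only on the
   preferences over its own side: F would be reducible.  Given a triangle, fix
   an alternative z and put it on top of every ballot, followed by two
   neighbours x and y: the committee is {z, x} or {z, y}, and this choice is an
   Arrovian social preference on the neighbours of z.  Arrow's theorem (on the
   neighbourhood, or on a triangle through z when z has only two neighbours)
   yields a dictator at z.  Adjacent alternatives share their dictator through
   a common neighbour, and any two alternatives have a common neighbour, so a
   single voter d dictates everywhere.  The committee is then d's top
   alternative t with d's favourite neighbour of t, d's favourite committee in
   the range. *)

Section LinearOrder.
Variables (T : Type) (L : lorder T).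

Lemma lorder_refl x : L x x.
Proof. by case: (lrel_lin L). Qed.

Lemma lorder_trans y x z : L x y -> L y z -> L x z.
Proof. by case: (lrel_lin L) => _ _ + _; apply. Qed.

Lemma lorder_anti x y : L x y -> L y x -> x = y.
Proof. by case: (lrel_lin L) => _ + _ _ hxy hyx; apply; rewrite hxy hyx. Qed.

Lemma lorder_total x y : L x y || L y x.
Proof. by case: (lrel_lin L). Qed.

Lemma lorder_nle x y : ~~ L x y -> L y x.
Proof. by move=> nxy; move: (lorder_total x y); rewrite (negbTE nxy). Qed.

End LinearOrder.

Lemma lorder_flip (T : eqType) (L : lorder T) x y : x != y -> L y x = ~~ L x y.
Proof.
move=> nxy; apply/idP/idP => [hyx|]; last exact: lorder_nle.
by apply: contraNN nxy => hxy; rewrite (lorder_anti hxy hyx).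
Qed.

Section Rank.
Variables (A : finType) (L : lorder A).

Definition rank (x : A) : nat := #|[set y | L y x]|.

Lemma lorder_rank x y : L x y = (rank x <= rank y).
Proof.
apply/idP/idP => [hxy|].
  by apply/subset_leq_card/subsetP => z; rewrite !inE => hzx; apply: lorder_trans hzx hxy.
apply: contraLR => nxy; have hyx := lorder_nle nxy; rewrite -ltnNge; apply/proper_card/properP.
split; first by apply/subsetP => z; rewrite !inE => hzy; apply: lorder_trans hzy hyx.
by exists x; rewrite !inE ?lorder_refl.
Qed.

Lemma rank_inj : injective rank.
Proof. by move=> x y exy; apply: (@lorder_anti _ L); rewrite lorder_rank exy. Qed.

Lemma exists_best (X : {set A}) : X != set0 -> exists b, is_best L X b.
Proof.
case/set0Pn => x0 x0X; exists [arg min_(y < x0 in X) rank y].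
case: arg_minnP => // b bX minb; split=> // x xX.
by rewrite lorder_rank; apply: minb.
Qed.

Lemma exists_worst (X : {set A}) : X != set0 -> exists w, is_worst L X w.
Proof.
case/set0Pn => x0 x0X; exists [arg max_(y > x0 in X) rank y].
case: arg_maxnP => // w wX maxw; split=> // x xX.
by rewrite lorder_rank; apply: maxw.
Qed.

End Rank.

Section Lexicographic.
Variables (T : Type) (k : T -> nat) (L : lorder T).

Definition lex_rel : rel T := fun x y => (k x < k y) || (k x == k y) && L x y.

Lemma lex_rel_linear : is_linear lex_rel.
Proof.
rewrite /lex_rel; split.
- by move=> x; rewrite eqxx lorder_refl orbT.
- move=> x y /andP[]; case: ltngtP => //= ekxy hxy hyx.
  exact: lorder_anti hxy hyx.
- move=> y x z /orP[ltxy|/andP[/eqP exy hxy]] /orP[ltyz|/andP[/eqP eyz hyz]].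
  + by rewrite (ltn_trans ltxy ltyz).
  + by rewrite -eyz ltxy.
  + by rewrite exy ltyz.
  + by rewrite exy eyz eqxx (lorder_trans hxy hyz) orbT.
- move=> x y; case: ltngtP => //= _; exact: lorder_total.
Qed.

Definition lex_order : lorder T := LOrder lex_rel_linear.

Lemma lex_orderE x y : lex_order x y = (k x < k y) || (k x == k y) && L x y.
Proof. by []. Qed.

End Lexicographic.

Lemma enum_rank_linear (A : finType) :
  is_linear (fun x y : A => enum_rank x <= enum_rank y).
Proof.
split=> [x|x y|y x z|x y]; rewrite ?leqnn //; last exact: leq_total.
  by rewrite -eqn_leq => /eqP/ord_inj/enum_rank_inj.
exact: leq_trans.
Qed.

Definition enum_order (A : finType) : lorder A := LOrder (@enum_rank_linear A).

Definition raise (A : finType) (b : A) (L : lorder A) : lorder A :=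
  lex_order (fun x => x != b) L.
Definition sink (A : finType) (b : A) (L : lorder A) : lorder A :=
  lex_order (fun x => x == b) L.
Definition raise_set (A : finType) (S : {set A}) (L : lorder A) : lorder A :=
  lex_order (fun x => x \notin S) L.

Section Moves.
Variables (A : finType) (L : lorder A).

Lemma raiseE b x y : raise b L x y = (x == b) || (y != b) && L x y.
Proof. by rewrite lex_orderE; case: eqP => [->|]; case: eqP => //= ->; rewrite lorder_refl. Qed.

Lemma sinkE b x y : sink b L x y = (y == b) || (x != b) && L x y.
Proof. by rewrite lex_orderE; case: eqP => [->|]; case: eqP => //= ->; rewrite lorder_refl. Qed.

Lemma raise_setE (S : {set A}) x y :
  raise_set S L x y = if x \in S then (y \notin S) || L x y else (y \notin S) && L x y.
Proof. by rewrite lex_orderE; case: (x \in S); case: (y \in S). Qed.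

Lemma raise_top b y : raise b L b y.
Proof. by rewrite raiseE eqxx. Qed.

Lemma raise_other b x y : x != b -> y != b -> raise b L x y = L x y.
Proof. by rewrite raiseE => /negbTE -> ->. Qed.

Lemma sink_bot b x : sink b L x b.
Proof. by rewrite sinkE eqxx. Qed.

Lemma sink_other b x y : x != b -> y != b -> sink b L x y = L x y.
Proof. by rewrite sinkE => -> /negbTE ->. Qed.

Lemma raise_set_above (S : {set A}) x y : x \in S -> y \notin S -> raise_set S L x y.
Proof. by rewrite raise_setE => -> ->. Qed.

End Moves.

Lemma raise_raise_set_above (A : finType) (L : lorder A) (b : A) (S : {set A}) x y :
  x \in b |: S -> y \notin b |: S -> raise b (raise_set S L) x y.
Proof.
rewrite !in_setU1 negb_or raiseE => /orP[-> // | xS] /andP[-> yS].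
by rewrite raise_set_above ?orbT.
Qed.

Definition extend (A : finType) (B : {set A}) (Q : lorder (sub_of B)) : lorder A :=
  lex_order (fun x => if insub x is Some u then rank Q u else 0) (enum_order A).

Lemma extendE (A : finType) (B : {set A}) (Q : lorder (sub_of B)) (u v : sub_of B) :
  extend Q (val u) (val v) = Q u v.
Proof.
rewrite lex_orderE !valK; case: (eqVneq u v) => [-> | nuv].
  by rewrite ltnn eqxx !lorder_refl.
have nr : rank Q u != rank Q v by apply: contra nuv => /eqP/rank_inj ->.
by rewrite (negbTE nr) orbF lorder_rank ltn_neqAle nr.
Qed.

(** * Arrow's theorem *)

Lemma exists_switch (p : pred nat) n :
  ~~ p 0 -> p n -> exists2 m, m < n & ~~ p m && p m.+1.
Proof.
elim: n => [|n IHn] p0 pn; first by rewrite (negbTE p0) in pn.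
case: (boolP (p n)) => [/(IHn p0) [m ltmn hm] | npn]; last by exists n; rewrite ?npn.
by exists m => //; apply: ltnW.
Qed.

Section Arrow.
Variables (V A : finType) (C : {set A}) (soc : profile V A -> A -> A -> bool).
Hypothesis soc_asym : forall (P : profile V A) x y,
  x \in C -> y \in C -> x != y -> soc P x y = ~~ soc P y x.
Hypothesis soc_trans : forall (P : profile V A) x y z,
  x \in C -> y \in C -> z \in C -> x != y -> y != z -> x != z ->
  soc P x y -> soc P y z -> soc P x z.
Hypothesis soc_pareto : forall (P : profile V A) x y,
  x \in C -> y \in C -> x != y -> (forall j, P j x y) -> soc P x y.
Hypothesis soc_iia : forall (P Q : profile V A) x y,
  x \in C -> y \in C -> x != y -> (forall j, P j x y = Q j x y) -> soc P x y = soc Q x y.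

Lemma extremal_not_between (P : profile V A) a b c :
  a \in C -> b \in C -> c \in C -> a != b -> c != b -> a != c ->
  (forall j, P j b a = P j b c) -> soc P a b -> ~~ soc P b c.
Proof.
move=> aC bC cC nab ncb nac b_side hab; apply/negP => hbc.
have nba : b != a by rewrite eq_sym.
have nbc : b != c by rewrite eq_sym.
pose Q : profile V A := fun j =>
  if P j b a then raise b (raise c (P j)) else raise c (P j).
have eab : soc Q a b = soc P a b.
  apply: soc_iia => // j; rewrite /Q; case: ifP => hba; last exact: raise_other.
  by rewrite raiseE (negbTE nab) eqxx (lorder_flip (P j) nba) hba.
have ebc : soc Q b c = soc P b c.
  apply: soc_iia => // j; rewrite /Q -b_side; case: ifP => hba; first exact: raise_top.
  by rewrite raiseE (negbTE nbc) eqxx.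
have hca : soc Q c a.
  apply: soc_pareto; rewrite 1?eq_sym // => j; rewrite /Q.
  by case: ifP => _; rewrite ?raise_top // raiseE (negbTE ncb) nab raise_top.
have hac : soc Q a c by apply: (@soc_trans _ a b c); rewrite ?eab ?ebc.
by move: hca; rewrite soc_asym 1?eq_sym // hac.
Qed.

(* [b] is on top for the voters in [S] and at the bottom for the others. *)
Definition polar (b : A) (S : {set V}) : profile V A :=
  fun j => lex_order (fun x => (x == b) (+) (j \in S)) (enum_order A).

Lemma polar_b b S j a : a != b -> polar b S j b a = (j \in S).
Proof. by move=> nab; rewrite lex_orderE eqxx (negbTE nab); case: (j \in S). Qed.

Lemma polar_a b S j a : a != b -> polar b S j a b = (j \notin S).
Proof. by move=> nab; rewrite lex_orderE eqxx (negbTE nab); case: (j \in S). Qed.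

Lemma polar_low b S c :
  b \in C -> c \in C -> c != b -> soc (polar b S) c b ->
  forall a, a \in C -> a != b -> soc (polar b S) a b.
Proof.
move=> bC cC ncb hcb a aC nab; case: (eqVneq a c) => [-> // | nac].
have nca : c != a by rewrite eq_sym.
rewrite soc_asym //; apply: (extremal_not_between cC bC aC) => // j.
by rewrite !polar_b.
Qed.

Definition pivotal b (S : {set V}) d :=
  [/\ d \notin S, forall a, a \in C -> a != b -> soc (polar b S) a b
    & forall c, c \in C -> c != b -> soc (polar b (d |: S)) b c].

Lemma exists_pivotal b a :
  b \in C -> a \in C -> a != b -> exists S d, pivotal b S d.
Proof.
(* The voters, in the order of [enum V], move [b] from the bottom to the top;
   [d] is the one whose move first lifts [b] above every other alternative. *)
move=> bC aC nab.
pose first k : {set V} := [set j in take k (enum V)].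
pose high k := [forall c in C, (c != b) ==> soc (polar b (first k)) b c].
have [||m ltm /andP[lowm highm1]] := @exists_switch high #|V|.
- apply/negP => /forall_inP /(_ a aC) /implyP /(_ nab).
  rewrite soc_asym 1?eq_sym // soc_pareto // => j.
  by rewrite polar_a // inE take0.
- apply/forall_inP => c cC; apply/implyP => ncb; apply: soc_pareto; rewrite 1?eq_sym // => j.
  by rewrite polar_b // inE cardE take_size mem_enum.
have [x0 _] : exists x0, x0 \in V by apply/card_gt0P; apply: leq_ltn_trans ltm.
have ltm' : m < size (enum V) by rewrite -cardE.
set d := nth x0 (enum V) m.
have first_next : first m.+1 = d |: first m.
  by apply/setP => j; rewrite !inE (take_nth x0) // mem_rcons.
have d_new : d \notin first m.
  have := take_uniq m.+1 (enum_uniq V).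
  by rewrite (take_nth x0) // rcons_uniq inE => /andP[].
exists (first m), d; split => //; last first.
  by move=> c cC ncb; rewrite -first_next; apply: (implyP (forall_inP highm1 c cC)).
have [c cC /andP[ncb hbc]] : exists2 c, c \in C & (c != b) && ~~ soc (polar b (first m)) b c.
  by move: lowm; rewrite negb_forall_in => /exists_inP[c cC]; rewrite negb_imply; exists c.
by apply: (polar_low bC cC ncb); rewrite soc_asym // negbK.
Qed.

Lemma pivotal_dictates b S d : b \in C -> pivotal b S d ->
  forall (P : profile V A) a c,
  a \in C -> c \in C -> a != b -> c != b -> a != c -> soc P a c = P d a c.
Proof.
move=> bC [dS low high].
suff dict_le (P : profile V A) a c : a \in C -> c \in C -> a != b -> c != b -> a != c ->
    P d a c -> soc P a c.
  move=> P a c aC cC nab ncb nac; case hac: (P d a c); first exact: dict_le.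
  have nca : c != a by rewrite eq_sym.
  apply/negbTE; rewrite soc_asym // negbK; apply: dict_le => //.
  by rewrite (lorder_flip (P d) nac) hac.
move=> aC cC nab ncb nac hac.
have nba : b != a by rewrite eq_sym.
have nca : c != a by rewrite eq_sym.
have nbc : b != c by rewrite eq_sym.
pose Q : profile V A := fun j =>
  if j \in S then raise b (P j) else if j == d then raise a (raise b (P j)) else sink b (P j).
have eab : soc Q a b = soc (polar b S) a b.
  apply: soc_iia => // j; rewrite polar_a // /Q; case: ifP => jS.
    by rewrite raiseE (negbTE nab) eqxx.
  by case: ifP => _; rewrite ?raise_top ?sink_bot.
have ebc : soc Q b c = soc (polar b (d |: S)) b c.
  apply: soc_iia => // j; rewrite polar_b // in_setU1 /Q; case: ifP => jS.
    by rewrite raise_top orbT.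
  case: ifP => jd; first by rewrite raise_other // raise_top.
  by rewrite sinkE (negbTE ncb) eqxx.
have : soc Q a c.
  by apply: (@soc_trans _ a b c); rewrite 1?eq_sym ?eab ?ebc //; [apply: low | apply: high].
rewrite (@soc_iia Q P) // => j; rewrite /Q; case: ifP => _; first exact: raise_other.
by case: eqP => [->|_]; [rewrite raise_top hac | apply: sink_other].
Qed.

Lemma pivotal_unique b S d a d' : pivotal b S d -> a \in C -> b \in C -> a != b ->
  (forall P : profile V A, soc P a b = P d' a b) -> d' = d.
Proof.
move=> [dS low high] aC bC nab dict; apply/eqP/negP => /negP nd'd.
have same : polar b S d' = polar b (d |: S) d' by rewrite /polar in_setU1 (negbTE nd'd).
by have := low a aC nab; rewrite dict same -dict soc_asym // high.
Qed.

Theorem arrow : 2 < #|C| ->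
  exists d, forall P x y, x \in C -> y \in C -> x != y -> soc P x y = P d x y.
Proof.
move=> C3.
have other u v : exists w, [/\ w \in C, w != u & w != v].
  have : 0 < #|C :\: [set u; v]|.
    have := subset_leq_card (subsetIr C [set u; v]).
    have : #|[set u; v]| <= 2 by rewrite cards2; case: (u != v).
    rewrite cardsD; lia.
  by case/card_gt0P => w; rewrite !inE negb_or => /andP[/andP[nwu nwv] wC]; exists w.
have [b bC] : exists b, b \in C by apply/card_gt0P; apply: leq_ltn_trans C3.
have [a [aC nab _]] := other b b.
have [S [d pivd]] := exists_pivotal bC aC nab.
exists d => P x y xC yC nxy.
case: (boolP ((x != b) && (y != b))) => [/andP[nxb nyb] | ].
  exact: (pivotal_dictates bC pivd).
rewrite negb_and !negbK => xyb.
have [c [cC ncx ncy]] := other x y.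
have ncb : c != b by case/orP: xyb => /eqP <-.
have [S' [d' pivd']] : exists S' d', pivotal c S' d'.
  by apply: (exists_pivotal cC bC); rewrite eq_sym.
have [a' [a'C na'b na'c]] := other b c.
have -> : d = d'.
  apply/esym/(pivotal_unique pivd a'C bC na'b) => Q.
  by apply: (pivotal_dictates cC pivd'); rewrite // eq_sym.
by apply: (pivotal_dictates cC pivd'); rewrite // eq_sym.
Qed.

End Arrow.

Lemma voter_unique (V A : finType) (d1 d2 : V) (x y : A) : x != y ->
  (forall P : profile V A, P d1 x y = P d2 x y) -> d1 = d2.
Proof.
move=> nxy same; have nyx : y != x by rewrite eq_sym.
apply/eqP; move: (same (polar x [set d1])).
by rewrite !polar_b // !inE eqxx eq_sym => <-.
Qed.

(** * Dominance between committees *)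

Lemma card2_pair (A : finType) (X : {set A}) a b :
  #|X| = 2 -> a \in X -> b \in X -> a != b -> X = [set a; b].
Proof.
move=> X2 aX bX nab; apply/eqP; rewrite eq_sym eqEcard X2 cards2 nab andbT.
by apply/subsetP => x; rewrite !inE => /orP[] /eqP ->.
Qed.

Lemma card2_other (A : finType) (X : {set A}) a :
  #|X| = 2 -> a \in X -> exists2 b, b \in X & b != a.
Proof.
move/eqP/cards2P => [x1 [x2 [nx12 ->]]]; rewrite !inE => /orP[] /eqP ->.
  by exists x2; rewrite ?inE ?eqxx ?orbT // eq_sym.
by exists x1; rewrite ?inE ?eqxx.
Qed.

Lemma set2_eq2 (A : finType) (z x y : A) : x != z -> ([set z; x] == [set z; y]) = (x == y).
Proof.
move=> nxz; apply/eqP/eqP => [e | -> //].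
by have := set22 z x; rewrite e !inE (negbTE nxz) => /eqP.
Qed.

Lemma card2_drop (A : finType) (X : {set A}) x y w :
  #|X| = 2 -> X \subset x |: [set y; w] -> x \notin X -> X = [set y; w].
Proof.
move=> X2 sub xX; apply/eqP; rewrite eqEcard X2 cards2 ltnS leq_b1 andbT.
apply/subsetP => u uX; move: (subsetP sub u uX); rewrite in_setU1 => /orP[/eqP eu | //].
by move: xX; rewrite -eu uX.
Qed.

Lemma card2_neq0 (A : finType) (X : {set A}) : #|X| = 2 -> X != set0.
Proof. by move=> X2; rewrite -card_gt0 X2. Qed.

Section Dominance.
Variables (A : finType) (L : lorder A).
Implicit Types X Y Z U W : {set A}.

Definition dominates (X Y : {set A}) : Prop :=
  (forall y, y \in Y -> exists2 x, x \in X & L x y) /\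
  (exists2 y, y \in Y & forall x, x \in X -> L x y).

Lemma dominates_of_ge X Y : X != set0 -> Y != set0 ->
  geO L X Y -> geP L X Y -> dominates X Y.
Proof.
move=> nX nY hO hP.
have [[bX hbX] [bY hbY]] := (exists_best L nX, exists_best L nY).
have [[wX hwX] [wY hwY]] := (exists_worst L nX, exists_worst L nY).
split.
- move=> y yY; exists bX; first by case: hbX.
  exact: lorder_trans (hO _ _ hbX hbY) (proj2 hbY y yY).
- exists wY; first by case: hwY.
  by move=> x xX; apply: lorder_trans (proj2 hwX x xX) (hP _ _ hwX hwY).
Qed.

Lemma dominates_refl X : X != set0 -> dominates X X.
Proof.
move=> /(exists_worst L) [w [wX hw]].
by split; [move=> y yX; exists y => //; apply: lorder_refl | exists w].
Qed.

Lemma dominates_trans Y X Z : dominates X Y -> dominates Y Z -> dominates X Z.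
Proof.
move=> [oXY [y yY pXY]] [oYZ [z zZ pYZ]]; split.
  move=> z' z'Z; have [y' y'Y hy'] := oYZ z' z'Z; have [x xX hx] := oXY y' y'Y.
  by exists x => //; apply: lorder_trans hx hy'.
by exists z => // x xX; apply: lorder_trans (pXY x xX) (pYZ y yY).
Qed.

Lemma card2_best_worst X b w : #|X| = 2 -> is_best L X b -> is_worst L X w ->
  X = [set b; w].
Proof.
move=> X2 [bX hb] [wX hw]; apply: card2_pair => //; apply/eqP => ebw.
have : X \subset [set b].
  apply/subsetP => x xX; rewrite inE; apply/eqP/lorder_anti; last exact: hb.
  by rewrite ebw; apply: hw.
by move/subset_leq_card; rewrite cards1 X2.
Qed.

Lemma dominates_anti X Y : #|X| = 2 -> #|Y| = 2 ->
  dominates X Y -> dominates Y X -> X = Y.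
Proof.
move=> X2 Y2 [oXY [y yY pXY]] [oYX [x xX pYX]].
have [[bX hbX] [bY hbY]] := (exists_best L (card2_neq0 X2), exists_best L (card2_neq0 Y2)).
have [[wX hwX] [wY hwY]] := (exists_worst L (card2_neq0 X2), exists_worst L (card2_neq0 Y2)).
have ge_best U W bU bW : (forall w, w \in W -> exists2 u, u \in U & L u w) ->
    is_best L U bU -> is_best L W bW -> L bU bW.
  move=> o [_ hbU] [bWW _]; have [u uU hu] := o bW bWW.
  exact: lorder_trans (hbU u uU) hu.
have ge_worst U W wU wW w : w \in W -> (forall u, u \in U -> L u w) ->
    is_worst L U wU -> is_worst L W wW -> L wU wW.
  by move=> wW' p [wUU _] [_ hwW]; apply: lorder_trans (p wU wUU) (hwW w wW').
have eb : bX = bY by apply: lorder_anti; [apply: ge_best oXY _ _ | apply: ge_best oYX _ _].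
have ew : wX = wY.
  by apply: lorder_anti; [apply: ge_worst yY pXY _ _ | apply: ge_worst xX pYX _ _].
by rewrite (card2_best_worst X2 hbX hwX) (card2_best_worst Y2 hbY hwY) eb ew.
Qed.

Lemma dominates_shared_le x y z : dominates [set x; z] [set y; z] -> L x y.
Proof.
move=> [o [v]]; rewrite !inE => /orP[] /eqP -> hv; first by apply: hv; rewrite set21.
have [u] := o y (set21 y z); rewrite !inE => /orP[] /eqP -> // hzy.
by apply: lorder_trans hzy; apply: hv; rewrite set21.
Qed.

End Dominance.

Lemma dominates_transfer (A : finType) (L L' : lorder A) (X Y : {set A}) :
  #|X| = 2 -> #|Y| = 2 -> (forall x w, x \in X -> w \notin X -> L x w -> L' x w) ->
  dominates L X Y -> dominates L' X Y.
Proof.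
move=> X2 Y2 up [o [y0 y0Y p]]; split.
  move=> y yY; case: (boolP (y \in X)) => yX; first by exists y => //; apply: lorder_refl.
  by have [x xX hx] := o y yY; exists x => //; apply: up.
case: (boolP (y0 \in X)) => y0X; last by exists y0 => // x xX; apply: up => //; apply: p.
have [m [mX hm]] := exists_worst L' (card2_neq0 X2).
case: (eqVneq m y0) => [emy0 | nmy0]; first by exists y0 => //; rewrite -emy0.
case: (boolP (m \in Y)) => mY; first by exists m.
have [y1 y1Y ny1y0] := card2_other Y2 y0Y.
have eX : X = [set y0; m] by apply: card2_pair; rewrite // eq_sym.
have y1X : y1 \notin X by rewrite eX !inE negb_or ny1y0; apply: contra mY => /eqP <-.
have hmy1 : L m y1.
  have [x] := o y1 y1Y; rewrite eX !inE => /orP[] /eqP -> // hy0y1.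
  exact: lorder_trans (p m mX) hy0y1.
by exists y1 => // x xX; apply: lorder_trans (hm x xX) (up m y1 mX y1X hmy1).
Qed.

Section Update.
Variables (V : eqType) (T : Type).
Implicit Types (P : profile V T) (L : lorder T).

Lemma update_id P i : update P i (P i) = P.
Proof. by apply: funext => j; rewrite /update; case: eqP => // ->. Qed.

Lemma update_update P i L L' : update (update P i L) i L' = update P i L'.
Proof. by apply: funext => j; rewrite /update; case: eqP. Qed.

Lemma update_eq P i L : update P i L i = L.
Proof. by rewrite /update eqxx. Qed.

Lemma update_neq P i L j : j != i -> update P i L j = P j.
Proof. by rewrite /update => /negbTE ->. Qed.

End Update.

Lemma update_ind (V : finType) (T : Type) (Inv : profile V T -> Prop) (P Q : profile V T) :
  Inv Q -> (forall M i, Inv M -> M i = Q i -> Inv (update M i (P i))) -> Inv P.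
Proof.
move=> InvQ step.
suff mixed s : uniq s -> Inv (fun j => if j \in s then P j else Q j).
  have -> : P = (fun j => if j \in enum V then P j else Q j).
    by apply: funext => j; rewrite mem_enum.
  exact: mixed (enum_uniq V).
elim: s => [_ | i s IHs /andP[nis us]]; first by rewrite (_ : (fun j => _) = Q) //; apply: funext.
have -> : (fun j => if j \in i :: s then P j else Q j) =
          update (fun j => if j \in s then P j else Q j) i (P i).
  by apply: funext => j; rewrite /update in_cons; case: eqP => [->|].
by apply: step (IHs us) _; rewrite (negbTE nis).
Qed.

(** * Strategy-proof consular election rules *)

Section Rule.
Variables (V A : finType) (F : profile V A -> {set A}).
Hypotheses (F2 : forall P, #|F P| = 2) (spoF : SPO F) (sppF : SPP F).
Hypothesis viableF : weakly_viable F.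
Implicit Types (P Q M : profile V A) (L : lorder A).

Lemma dominates_update P i L : dominates (P i) (F P) (F (update P i L)).
Proof.
by apply: dominates_of_ge; [exact: card2_neq0 | exact: card2_neq0 | apply: spoF | apply: sppF].
Qed.

Lemma dominates_deviation M i L : dominates L (F (update M i L)) (F M).
Proof.
by have := dominates_update (update M i L) i (M i); rewrite update_eq update_update update_id.
Qed.

Lemma F_monotone P P' :
  (forall j x w, x \in F P -> w \notin F P -> P j x w -> P' j x w) -> F P' = F P.
Proof.
move=> up; apply: (update_ind (Inv := fun M => F M = F P)) => // M i FM Mi.
rewrite -FM; apply: (dominates_anti (L := P' i)); rewrite ?F2 //.
  exact: dominates_deviation.
apply: (dominates_transfer (L := P i)); rewrite ?F2 //; first by rewrite FM; apply: up.
by rewrite -Mi; apply: dominates_update.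
Qed.

Lemma F_update_sub M i L (S : {set A}) : F M \subset S ->
  (forall x w, x \in S -> w \notin S -> L x w) -> F (update M i L) \subset S.
Proof.
move=> FMS above; have [_ [y yM hy]] := dominates_deviation M i L.
apply/subsetP => x xM'; apply: contraT => xS; have yS := subsetP FMS y yM.
by move: (xS); rewrite (lorder_anti (hy x xM') (above y x yS xS)) yS.
Qed.

Lemma F_sub_top P (S : {set A}) : (exists Q, F Q \subset S) ->
  (forall j x w, x \in S -> w \notin S -> P j x w) -> F P \subset S.
Proof.
move=> [Q FQS] above; apply: (update_ind (Q := Q) (Inv := fun M => F M \subset S)) => //.
by move=> M i FMS _; apply: F_update_sub FMS (above i).
Qed.

Lemma top_in_update M i L z : z \in F M -> (forall w, L z w) -> z \in F (update M i L).
Proof.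
move=> zM ztop; have [o _] := dominates_deviation M i L.
by have [x xM' hxz] := o z zM; rewrite -(lorder_anti hxz (ztop x)).
Qed.

Lemma unanimous_top_in P z : (forall j w, P j z w) -> z \in F P.
Proof.
move=> ztop; have [Q zQ] := viableF z.
apply: (update_ind (Q := Q) (Inv := fun M => z \in F M)) => // M i zM _.
exact: top_in_update.
Qed.

Lemma F_top_pair P z x : in_range F [set z; x] ->
  (forall j w, w != z -> w != x -> P j z w && P j x w) -> F P = [set z; x].
Proof.
move=> [Q FQ] top; apply/eqP; rewrite eqEcard F2 -(F2 Q) FQ leqnn andbT.
apply: F_sub_top; first by exists Q; rewrite FQ.
move=> j u w; rewrite !inE negb_or => /orP[] /eqP -> /andP[nwz nwx];
  by case/andP: (top j w nwz nwx).
Qed.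

Lemma unanimous_dominates L Y : in_range F Y -> dominates L (F (fun _ => L)) Y.
Proof.
move=> [Q <-]; apply: (update_ind (Q := Q) (Inv := fun M => dominates L (F M) (F Q))).
  exact/dominates_refl/card2_neq0.
by move=> M i hM _; apply: dominates_trans (dominates_deviation M i L) hM.
Qed.

Definition adj x y : bool := (x != y) && `[< in_range F [set x; y] >].

Lemma adjP x y : reflect (x != y /\ in_range F [set x; y]) (adj x y).
Proof. by apply: (iffP andP) => -[nxy /asboolP]. Qed.

Lemma adj_sym x y : adj x y = adj y x.
Proof. by rewrite /adj eq_sym setUC. Qed.

Lemma adjxx x : adj x x = false.
Proof. by rewrite /adj eqxx. Qed.

Lemma adj_F P x y : x \in F P -> y \in F P -> x != y -> adj x y.
Proof. by move=> xP yP nxy; apply/adjP; split => //; exists P; apply: card2_pair. Qed.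

Lemma adj_neighbour t x y : adj x y -> adj t x || adj t y.
Proof.
move=> axy; have /adjP[nxy rxy] := axy.
case: (eqVneq t x) => [-> | ntx]; first by rewrite axy orbT.
case: (eqVneq t y) => [-> | nty]; first by rewrite adj_sym axy.
(* With [t], then [x] and [y], on top of every ballot, [t] is elected together with
   some [s]; dominating the committee [{x, y}] forces [s] into [{x, y}]. *)
pose L := raise t (raise_set [set x; y] (enum_order A)).
have tU : t \in F (fun _ => L) by apply: unanimous_top_in => _ w; apply: raise_top.
have [s sU nst] := card2_other (F2 _) tU.
have [_ [w wxy hw]] := unanimous_dominates L rxy.
have nwt : w != t by move: wxy; rewrite !inE => /orP[] /eqP ->; rewrite eq_sym.
have sxy : s \in [set x; y].
  by apply: contraT => sxy; move: (hw s sU); rewrite raise_other // raise_setE (negbTE sxy) wxy.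
have ats : adj t s by apply: (adj_F tU sU); rewrite eq_sym.
by move: sxy; rewrite !inE => /orP[] /eqP <-; rewrite ats ?orbT.
Qed.

Lemma range_meets_neighbours t Y : in_range F Y -> exists2 y, y \in Y & adj t y.
Proof.
move=> [Q <-]; have /eqP/cards2P [y1 [y2 [ny12 eQ]]] := F2 Q.
have a12 : adj y1 y2 by apply: (adj_F (P := Q)); rewrite ?eQ ?set21 ?set22.
by case/orP: (adj_neighbour t a12) => h; [exists y1 | exists y2]; rewrite ?eQ ?set21 ?set22.
Qed.

(** * Irreducibility yields a triangle *)

Definition independent (B : {set A}) : Prop := {in B &, forall x y, ~~ adj x y}.

Section Split.
Variable a0 : A.

(* [a0] is a junk default, never returned when [~: B] is independent. *)
Definition F_in (B : {set A}) P : A := odflt a0 [pick x in F P :&: B].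

Lemma F_inP (B : {set A}) P : independent (~: B) -> F_in B P \in F P :&: B.
Proof.
move=> indBc; rewrite /F_in; case: pickP => [x // | none].
have outB z : z \in F P -> z \in ~: B.
  by move=> zP; rewrite inE; move: (none z); rewrite inE zP /= => ->.
have /eqP/cards2P [x [y [nxy eP]]] := F2 P.
have [xP yP] : x \in F P /\ y \in F P by rewrite eP set21 set22.
by have := indBc _ _ (outB x xP) (outB y yP); rewrite (adj_F xP yP nxy).
Qed.

Variable B : {set A}.
Hypotheses (indB : independent B) (indBc : independent (~: B)).

Let indBcc : independent (~: ~: B). Proof. by rewrite setCK. Qed.

Lemma F_split P : F P = [set F_in B P; F_in (~: B) P].
Proof.
have /setIP[gP gB] := F_inP P indBc; have /setIP[hP hBc] := F_inP P indBcc.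
by apply: card2_pair => //; apply: contraTneq hBc => <-; rewrite inE gB.
Qed.

Lemma F_in_update_le P i L : L (F_in B (update P i L)) (F_in B P).
Proof.
set P' := update P i L.
set g := F_in B P; set g' := F_in B P'; set h := F_in (~: B) P; set h' := F_in (~: B) P'.
have /setIP[_ gB] : g \in F P :&: B := F_inP P indBc.
have /setIP[_ hBc] : h \in F P :&: ~: B := F_inP P indBcc.
have /setIP[h'P' h'Bc] : h' \in F P' :&: ~: B := F_inP P' indBcc.
(* Voter [i] moving from [P'] to [L2] gets [{g, h'}], which [L] must not prefer
   to [F P' = {g', h'}]. *)
pose L2 := raise h' (raise_set [set g; h] (enum_order A)).
set W := F (update P i L2).
have eW' : update P' i L2 = update P i L2 by rewrite update_update.
have h'W : h' \in W by rewrite /W -eW'; apply: top_in_update => // w; apply: raise_top.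
have WS : W \subset h' |: [set g; h].
  apply: F_update_sub; first by rewrite F_split subsetU1.
  by move=> x w; apply: raise_raise_set_above.
have gW : g \in W.
  have /setIP[xW xB] := F_inP (update P i L2) indBc.
  move: (subsetP WS _ xW); rewrite !inE => /orP[/eqP e | /orP[/eqP e | /eqP e]].
  - by move: h'Bc; rewrite -e inE xB.
  - by rewrite -e.
  - by move: hBc; rewrite -e inE xB.
have eW : W = [set g; h'].
  by apply: card2_pair (F2 _) gW h'W _; apply: contraTneq h'Bc => <-; rewrite inE gB.
have : dominates L (F P') W by rewrite /W -eW' -{1}(update_eq P i L); apply: dominates_update.
by rewrite eW (F_split P'); apply: dominates_shared_le.
Qed.

Lemma F_in_update P i L : {in B &, forall x y, P i x y = L x y} ->
  F_in B (update P i L) = F_in B P.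
Proof.
move=> agree; apply: (@lorder_anti _ L); first exact: F_in_update_le.
have := F_in_update_le (update P i L) i (P i).
rewrite update_update update_id agree //.
  by have /setIP[] := F_inP P indBc.
by have /setIP[] := F_inP (update P i L) indBc.
Qed.

Lemma F_in_local P Q : (forall j, {in B &, forall x y, P j x y = Q j x y}) ->
  F_in B P = F_in B Q.
Proof.
move=> agree; apply: (update_ind (Q := P) (Inv := fun M => F_in B P = F_in B M)) => //.
by move=> M i -> Mi; rewrite F_in_update // => x y xB yB; rewrite Mi agree.
Qed.

End Split.

Lemma reducible_of_independent (B : {set A}) :
  independent B -> independent (~: B) -> reducible F.
Proof.
move=> indB indBc; have indBcc : independent (~: ~: B) by rewrite setCK.
pose P0 : profile V A := fun _ => enum_order A.
have [a0 _] : exists a0, a0 \in F P0 by apply/card_gt0P; rewrite F2.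
have /setIP[_ gB] := F_inP a0 P0 indBc; have /setIP[_ hBc] := F_inP a0 P0 indBcc.
exists B, (~: B); split; [by rewrite -setI_eq0 setICr | by rewrite setUCr |].
exists (fun Q : profile V (sub_of B) =>
  insubd (exist (fun x => x \in B) _ gB) (F_in a0 B (fun j => extend (Q j)))).
exists (fun Q : profile V (sub_of (~: B)) => insubd (exist (fun x => x \in ~: B) _ hBc)
                        (F_in a0 (~: B) (fun j => extend (Q j)))).
move=> P; rewrite !val_insubd.
have local D : independent D -> independent (~: D) ->
    F_in a0 D (fun j => extend (restr P D j)) = F_in a0 D P.
  move=> iD iDc; apply: F_in_local => // j x y xD yD.
  exact: (extendE (restr P D j) (exist _ x xD) (exist _ y yD)).
rewrite !local //.
have /setIP[_ ->] := F_inP a0 P indBc; have /setIP[_ ->] := F_inP a0 P indBcc.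
exact: F_split.
Qed.

Lemma triangle_of_irreducible : irreducible F ->
  exists a b c, [&& adj a b, adj b c & adj a c].
Proof.
move=> irrF; apply: contrapT => notri; apply: irrF.
have [a _] : exists a, a \in F (fun _ => enum_order A) by apply/card_gt0P; rewrite F2.
apply: (@reducible_of_independent [set x | (x == a) || ~~ adj a x]).
  move=> x y; rewrite !inE => /orP[/eqP -> | nax] /orP[/eqP -> | nay]; rewrite ?adjxx //.
  - by rewrite adj_sym.
  - by apply/negP => /(adj_neighbour a); rewrite (negbTE nax) (negbTE nay).
move=> x y; rewrite !inE !negb_or !negbK => /andP[_ ax] /andP[_ ay].
by apply/negP => axy; apply: notri; exists a, x, y; rewrite ax axy ay.
Qed.

(** * Local dictators *)

(* The social preference at [z]: with [z] on top of every ballot and [x], [y]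
   next, the committee is [{z, x}] or [{z, y}]. *)
Definition anchor z x y P : profile V A :=
  fun j => raise z (raise_set [set x; y] (P j)).

Definition beats z P x y : bool := F (anchor z x y P) == [set z; x].

Lemma F_raise z x (S : {set A}) P : adj z x -> x \in S ->
  exists2 g, g \in S & F (fun j => raise z (raise_set S (P j))) = [set z; g].
Proof.
move=> /adjP[nzx [Q FQ]] xS; pose M : profile V A := fun j => raise z (raise_set S (P j)).
have zM : z \in F M by apply: unanimous_top_in => j w; apply: raise_top.
have MS : F M \subset z |: S.
  apply: F_sub_top; first by exists Q; rewrite FQ setUS // sub1set.
  by move=> j u w; apply: raise_raise_set_above.
have [g gM ngz] := card2_other (F2 M) zM.
exists g; last by apply: card2_pair (F2 M) zM gM _; rewrite eq_sym.
by move: (subsetP MS g gM); rewrite in_setU1 (negbTE ngz).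
Qed.

Lemma F_anchor z x y P : adj z x ->
  F (anchor z x y P) = [set z; x] \/ F (anchor z x y P) = [set z; y].
Proof.
move=> azx; have [g] := F_raise P azx (set21 x y).
by rewrite !inE => /orP[] /eqP -> FM; [left | right].
Qed.

Lemma anchor_sym z x y P : anchor z y x P = anchor z x y P.
Proof. by rewrite /anchor setUC. Qed.

Lemma beats_asym z P x y : adj z x -> adj z y -> x != y ->
  beats z P x y = ~~ beats z P y x.
Proof.
move=> azx /adjP[nzy _] nxy; have /adjP[nzx _] := azx.
have [nxz nyz] : x != z /\ y != z by rewrite !(eq_sym _ z).
rewrite /beats (anchor_sym z x y P).
by case: (F_anchor y P azx) => ->; rewrite eqxx set2_eq2 // eq_sym (negbTE nxy).
Qed.

Lemma beats_pareto z P x y : adj z x -> x != y -> (forall j, P j x y) -> beats z P x y.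
Proof.
move=> /adjP[nzx rzx] nxy xy; rewrite /beats; apply/eqP/F_top_pair => // j w nwz nwx.
rewrite /anchor raise_top raiseE nwz raise_setE set21 /=.
case: (eqVneq w y) => [-> | nwy]; first by rewrite xy !orbT.
by rewrite !inE (negbTE nwx) (negbTE nwy) orbT.
Qed.

Lemma anchor_agree z x y P Q j u w : x != y -> P j x y = Q j x y ->
  u \in z |: [set x; y] -> anchor z x y P j u w = anchor z x y Q j u w.
Proof.
move=> nxy agree; rewrite /anchor !raiseE !raise_setE in_setU1.
case: (u == z) => //= uxy; rewrite uxy.
case: (boolP (w \in [set x; y])) => //= wxy; congr (_ && _).
move: uxy wxy; rewrite !inE => /orP[] /eqP -> /orP[] /eqP ->; rewrite ?lorder_refl //.
by rewrite !(lorder_flip _ nxy) agree.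
Qed.

Lemma beats_iia z P Q x y : adj z x -> x != y -> (forall j, P j x y = Q j x y) ->
  beats z P x y = beats z Q x y.
Proof.
move=> azx nxy agree; rewrite /beats (@F_monotone (anchor z x y P) (anchor z x y Q)) //.
move=> j u w uF _; rewrite (anchor_agree (Q := Q)) //.
by case: (F_anchor y P azx) uF => ->; rewrite !inE => /orP[] ->; rewrite ?orbT.
Qed.

Lemma beats_of_F M z g h P : F M = [set z; g] -> h != z ->
  (forall j, M j g h -> P j g h) -> beats z P g h.
Proof.
move=> FM nhz gh; rewrite /beats -FM; apply/eqP; apply: F_monotone => j u w.
rewrite FM !inE negb_or => /orP[] /eqP -> /andP[nwz nwg] huw; first exact: raise_top.
rewrite /anchor raiseE nwz raise_setE set21 /=.
case: (eqVneq w h) => [ewh | nwh]; first by subst w; rewrite gh ?orbT.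
by rewrite !inE (negbTE nwg) (negbTE nwh) orbT.
Qed.

Lemma beats_trans z P x y w : adj z x -> adj z y -> adj z w ->
  x != y -> y != w -> x != w -> beats z P x y -> beats z P y w -> beats z P x w.
Proof.
move=> azx azy azw nxy nyw nxw bxy byw.
have [nxz nyz nwz] : [/\ x != z, y != z & w != z].
  by move: azx azy azw => /adjP[? _] /adjP[? _] /adjP[? _]; rewrite !(eq_sym _ z).
set S := x |: [set y; w].
have [g gS FM] := F_raise P azx (setU11 x [set y; w]).
have notz u : u \in S -> u != z by rewrite !inE => /orP[/eqP -> | /orP[] /eqP ->].
have key h : h \in S -> beats z P g h.
  move=> hS; apply: beats_of_F FM (notz h hS) _ => j.
  by rewrite raise_other ?notz // raise_setE gS hS.
move: gS; rewrite !inE => /orP[/eqP eg | /orP[] /eqP eg]; subst g.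
- by apply: key; rewrite !inE eqxx ?orbT.
- by move: bxy; rewrite beats_asym // key // !inE eqxx ?orbT.
- by move: byw; rewrite beats_asym // key // !inE eqxx ?orbT.
Qed.

Lemma beats_trans_triangle P x y w : adj x y -> adj y w -> adj x w ->
  beats w P x y -> beats x P y w -> beats y P x w.
Proof.
move=> axy ayw axw bxy byw.
have [nxy nyw nxw] : [/\ x != y, y != w & x != w].
  by move: axy ayw axw => /adjP[? _] /adjP[? _] /adjP[? _].
set T := x |: [set y; w].
pose M : profile V A := fun j => raise_set T (P j).
have MT : F M \subset T.
  apply: F_sub_top => [|j u v]; last exact: raise_set_above.
  by case/adjP: axy => _ [Q FQ]; exists Q; rewrite FQ setUS // sub1set set21.
have inT u v j : u \in T -> v \in T -> M j u v -> P j u v.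
  by move=> uT vT; rewrite /M raise_setE uT vT.
have [xT yT wT] : [/\ x \in T, y \in T & w \in T] by rewrite !inE !eqxx ?orbT.
case: (boolP (x \in F M)) => xM; last first.
  have FM : F M = [set w; y] by rewrite setUC; apply: card2_drop MT xM.
  have := beats_of_F FM nxw (fun j => inT y x j yT xT).
  by move: bxy; rewrite (@beats_asym w P x y) ?(adj_sym w) // => /negP.
case: (boolP (y \in F M)) => yM; last first.
  have MT' : F M \subset y |: [set x; w].
    by apply: subset_trans MT _; apply/subsetP => u; rewrite !inE orbCA.
  have FM : F M = [set x; w] by apply: card2_drop MT' yM.
  have nyx : y != x by rewrite eq_sym.
  have := beats_of_F FM nyx (fun j => inT w y j wT yT).
  by move: byw; rewrite (@beats_asym x P y w) // => /negP.
have FM : F M = [set y; x] by apply: card2_pair (F2 M) yM xM _; rewrite eq_sym.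
by apply: beats_of_F FM _ (fun j => inT x w j xT wT); rewrite eq_sym.
Qed.

Definition local_dictator z d : Prop :=
  forall P x y, adj z x -> adj z y -> x != y -> beats z P x y = P d x y.

Lemma local_dictator_F z d P y : local_dictator z d -> (forall j w, P j z w) ->
  adj z y -> (forall y', adj z y' -> P d y y') -> F P = [set z; y].
Proof.
move=> dict ztop azy ybest; have zP := unanimous_top_in ztop.
have [g gP ngz] := card2_other (F2 P) zP.
have FP : F P = [set z; g] by apply: card2_pair (F2 P) zP gP _; rewrite eq_sym.
case: (eqVneq g y) => [<- // | ngy].
have azg : adj z g by apply: adj_F zP gP _; rewrite eq_sym.
have nyz : y != z by case/adjP: azy; rewrite eq_sym.
have nyg : y != g by rewrite eq_sym.
have := beats_of_F FP nyz (fun j h => h).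
by rewrite dict // (lorder_flip (P d) nyg) ybest.
Qed.

Section Triangle.
Variables a b c : A.
Hypothesis tri : [&& adj a b, adj b c & adj a c].
Let T := a |: [set b; c].

Lemma adj_triangle u v : u \in T -> v \in T -> u != v -> adj u v.
Proof.
case/and3P: tri => ab bc ac.
by rewrite !inE => /orP[/eqP-> | /orP[] /eqP->] /orP[/eqP-> | /orP[] /eqP->];
  rewrite ?eqxx // => _; rewrite // adj_sym.
Qed.

Let card_T : #|T| = 3.
Proof.
case/and3P: tri => /adjP[nab _] /adjP[nbc _] /adjP[nac _].
by rewrite cardsU1 cards2 nbc !inE negb_or nab nac.
Qed.

Definition third x y : A := odflt a [pick t in T :\: [set x; y]].

Lemma thirdE x y : x \in T -> y \in T -> x != y -> T :\: [set x; y] = [set third x y].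
Proof.
move=> xT yT nxy.
have /cards1P [t Tt] : #|T :\: [set x; y]| == 1.
  rewrite cardsD card_T (setIidPr _) ?cards2 ?nxy //.
  by apply/subsetP => u /set2P[] ->.
rewrite /third Tt; case: pickP => [u /set1P -> // | /(_ t)].
by rewrite set11.
Qed.

Lemma third_sym x y : third x y = third y x.
Proof. by rewrite /third setUC. Qed.

Lemma thirdP x y : x \in T -> y \in T -> x != y ->
  [/\ third x y \in T, third x y != x & third x y != y].
Proof.
move=> xT yT nxy; have := set11 (third x y).
by rewrite -thirdE // !inE negb_or => /andP[/andP[-> ->] ->].
Qed.

Lemma third_uniq x y w : x \in T -> y \in T -> w \in T -> x != y -> w != x -> w != y ->
  w = third x y.
Proof.
move=> xT yT wT nxy nwx nwy; apply/set1P; rewrite -thirdE //.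
by rewrite in_setD wT in_set2 negb_or nwx nwy.
Qed.

Lemma triangle_dictator : exists d, forall P x y w,
  x \in T -> y \in T -> w \in T -> x != y -> w != x -> w != y -> beats w P x y = P d x y.
Proof.
pose soc P x y := beats (third x y) P x y.
have [d dict] : exists d, forall P x y, x \in T -> y \in T -> x != y -> soc P x y = P d x y.
  apply: (arrow (C := T)); last by rewrite card_T.
  - move=> P x y xT yT nxy; have [tT ntx nty] := thirdP xT yT nxy.
    by rewrite /soc (third_sym y x); apply: beats_asym => //; apply: adj_triangle.
  - move=> P x y z xT yT zT nxy nyz nxz.
    have [nyx nzx nzy] : [/\ y != x, z != x & z != y] by rewrite !(eq_sym z) eq_sym.
    rewrite /soc -(third_uniq xT yT zT nxy nzx nzy) -(third_uniq yT zT xT nyz nxy nxz).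
    rewrite -(third_uniq xT zT yT nxz nyx nyz).
    by apply: beats_trans_triangle; apply: adj_triangle.
  - move=> P x y xT yT nxy hP; have [tT ntx nty] := thirdP xT yT nxy.
    by apply: beats_pareto => //; apply: adj_triangle; rewrite // eq_sym.
  - move=> P Q x y xT yT nxy hPQ; have [tT ntx nty] := thirdP xT yT nxy.
    by apply: beats_iia => //; apply: adj_triangle; rewrite // eq_sym.
exists d => P x y w xT yT wT nxy nwx nwy.
by rewrite (third_uniq xT yT wT nxy nwx nwy); apply: dict.
Qed.

End Triangle.

Section Dictator.
Variables a b c : A.
Hypothesis tri : [&& adj a b, adj b c & adj a c].

Lemma adj_two_of_triangle z :
  [|| adj z a && adj z b, adj z b && adj z c | adj z a && adj z c].
Proof.
case/and3P: tri => /(adj_neighbour z) zab /(adj_neighbour z) zbc /(adj_neighbour z) zac.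
by move: zab zbc zac; case: (adj z a); case: (adj z b); case: (adj z c).
Qed.

Lemma common_neighbour x y : exists w, adj x w && adj y w.
Proof.
case/or3P: (adj_two_of_triangle x) => /andP[? ?];
  case/or3P: (adj_two_of_triangle y) => /andP[? ?];
  solve [exists a; apply/andP; split; assumption | exists b; apply/andP; split; assumption
        | exists c; apply/andP; split; assumption].
Qed.

Lemma exists_local_dictator z : exists d, local_dictator z d.
Proof.
pose N := [set y | adj z y].
have NP y : (y \in N) = adj z y by rewrite inE.
case: (ltnP 2 #|N|) => [N3 | N2].
  have [d dict] : exists d, forall P x y,
      x \in N -> y \in N -> x != y -> beats z P x y = P d x y.
    apply: (@arrow V A N (beats z) _ _ _ _ N3) => [P x y | P x y w | P x y | P Q x y];
      rewrite !NP.
    - exact: beats_asym.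
    - exact: beats_trans.
    - by move=> azx _; apply: beats_pareto.
    - by move=> azx _; apply: beats_iia.
  by exists d => P x y azx azy; apply: dict; rewrite NP.
have [p [q /and3P[azp azq apq]]] : exists p q, [&& adj z p, adj z q & adj p q].
  case/and3P: tri => ab bc ac.
  by case/or3P: (adj_two_of_triangle z) => /andP[? ?];
    [exists a, b | exists b, c | exists a, c]; apply/and3P.
have npq : p != q by case/adjP: apq.
have eN : N = [set p; q].
  apply/eqP; rewrite eq_sym eqEcard cards2 npq N2 andbT.
  by apply/subsetP => u /set2P[] ->; rewrite NP.
have [d dict] := @triangle_dictator z p q (introT and3P (And3 azp apq azq)).
have nz u : u \in N -> z != u by rewrite NP => /adjP[].
exists d => P x y azx azy nxy.
have [xpq ypq] : x \in [set p; q] /\ y \in [set p; q] by rewrite -eN !NP.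
have [xT yT] : x \in z |: [set p; q] /\ y \in z |: [set p; q].
  by split; rewrite in_setU1 ?xpq ?ypq orbT.
by apply: dict => //; [exact: setU11 | apply: nz | apply: nz]; rewrite NP.
Qed.

Lemma local_dictator_adj z z' d1 d2 : adj z z' ->
  local_dictator z d1 -> local_dictator z' d2 -> d1 = d2.
Proof.
move=> azz' dict1 dict2; have [w /andP[azw az'w]] := common_neighbour z z'.
have [dT dictT] := @triangle_dictator z z' w (introT and3P (And3 azz' az'w azw)).
have [nzz' nzw nz'w] : [/\ z != z', z != w & z' != w].
  by move: azz' azw az'w => /adjP[? _] /adjP[? _] /adjP[? _].
have [zT z'T wT] : [/\ z \in z |: [set z'; w], z' \in z |: [set z'; w] & w \in z |: [set z'; w]].
  by rewrite !inE !eqxx ?orbT.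
have [nz'z az'z] : z' != z /\ adj z' z by rewrite eq_sym adj_sym.
have -> : d1 = dT.
  apply: (voter_unique nz'w) => P.
  by rewrite -(dict1 P z' w azz' azw nz'w) (dictT P z' w z z'T wT zT nz'w nzz' nzw).
apply/esym/(voter_unique nzw) => P.
by rewrite -(dict2 P z w az'z az'w nzw) (dictT P z w z' zT wT z'T nzw nz'z nz'w).
Qed.

Lemma exists_dictator : exists d, forall z, local_dictator z d.
Proof.
have [d0 dict0] := exists_local_dictator a.
exists d0 => z; have [w /andP[aw zw]] := common_neighbour a z.
have [dw dictw] := exists_local_dictator w; have [dz dictz] := exists_local_dictator z.
rewrite (local_dictator_adj aw dict0 dictw) (local_dictator_adj (z := w) _ dictw dictz) //.
by rewrite adj_sym.
Qed.

End Dictator.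

Lemma F_raise_others P d x y : F P = [set x; y] ->
  F (fun j => if j == d then P j else raise x (raise y (P j))) = F P.
Proof.
move=> FP; apply: F_monotone => j u w; rewrite FP !inE negb_or.
move=> /orP[] /eqP -> /andP[nwx nwy] huw; case: ifP => // _; first exact: raise_top.
by rewrite raiseE nwx raise_top orbT.
Qed.

Lemma notin_update M i L t : t \notin F M -> (forall x, x \in F M -> M i t x) ->
  t \notin F (update M i L).
Proof.
move=> tM ttop; apply/negP => tM'; have [o _] := dominates_update M i L.
have [x xM hxt] := o t tM'.
by move: tM; rewrite -(lorder_anti hxt (ttop x xM)) xM.
Qed.

Section GlobalDictator.
Variable d : V.
Hypothesis dict : forall z, local_dictator z d.

Lemma dictator_top_in P t : (forall x, P d t x) -> t \in F P.
Proof.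
move=> ttop; apply: contraT => tP.
have [y yP aty] := range_meets_neighbours t (ex_intro _ P erefl).
have [y' y'P ny'y] := card2_other (F2 P) yP.
have FP : F P = [set y; y'] by apply: card2_pair (F2 P) yP y'P _; rewrite eq_sym.
pose P' : profile V A := fun j => if j == d then P j else raise y (raise y' (P j)).
pose L := raise y (raise t (P d)).
have : t \notin F (update P' d L).
  by apply: notin_update; rewrite /P' F_raise_others // eqxx.
rewrite (@local_dictator_F y d _ t (@dict y)) ?set22 //.
- move=> j w; case: (eqVneq j d) => [-> | njd]; first by rewrite update_eq raise_top.
  by rewrite update_neq // /P' (negbTE njd) raise_top.
- by rewrite adj_sym.
- move=> v ayv; rewrite update_eq raiseE raise_top andbT.
  by case/adjP: ayv; rewrite eq_sym => ->; rewrite orbT.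
Qed.

Lemma dictator_F P t s : (forall x, P d t x) -> adj t s ->
  (forall y, adj t y -> P d s y) -> F P = [set t; s].
Proof.
move=> ttop ats sbest; have tP := dictator_top_in ttop.
have [u uP nut] := card2_other (F2 P) tP.
have FP : F P = [set t; u] by apply: card2_pair (F2 P) tP uP _; rewrite eq_sym.
rewrite -(F_raise_others d FP); apply: (local_dictator_F (@dict t)) => // [j w | y ay] /=.
  by case: ifP => [/eqP -> | _]; [apply: ttop | apply: raise_top].
by rewrite eqxx; apply: sbest.
Qed.

Lemma range_dictator_of_dictator : range_dictator F.
Proof.
exists d => P.
have [t0 _] : exists t0, t0 \in F P by apply/card_gt0P; rewrite F2.
have [t [_ ttop]] : exists t, is_best (P d) [set: A] t.
  by apply: exists_best; apply/set0Pn; exists t0.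
have {}ttop x : P d t x := ttop x (in_setT x).
have [s [ats sbest]] : exists s, is_best (P d) [set y | adj t y] s.
  have [y _ aty] := range_meets_neighbours t (ex_intro _ P erefl).
  by apply: exists_best; apply/set0Pn; exists y; rewrite inE.
rewrite inE in ats.
have {}sbest y : adj t y -> P d s y by move=> aty; apply: sbest; rewrite inE.
have FP := dictator_F ttop ats sbest.
split=> [|Y rY]; first by exists P.
split=> [b b' [bP bbest] _ | w w' [wP _] [_ w'worst]].
  by apply: lorder_trans (ttop b'); apply: bbest; rewrite FP set21.
have [y yY aty] := range_meets_neighbours t rY.
have sw' := lorder_trans (sbest y aty) (w'worst y yY).
by move: wP; rewrite FP => /set2P[] ->.
Qed.

End GlobalDictator.
End Rule.

Theorem corollary52 (V A : finType) (F : profile V A -> {set A}) :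
  0 < #|V| ->
  (forall P : profile V A, #|F P| = 2) ->
  irreducible F -> weakly_viable F -> SPO F -> SPP F ->
  range_dictator F.
Proof.
move=> _ F2 irrF viableF spoF sppF.
have [a [b [c tri]]] := triangle_of_irreducible F2 spoF sppF viableF irrF.
have [d dict] := exists_dictator F2 spoF sppF viableF tri.
exact: (range_dictator_of_dictator F2 spoF sppF viableF dict).
Qed.
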